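(* For every integer $i > 0$, the limits defining $d_0(W,\sigma^iW)$ and $d(W,\sigma^iW)$ exist, and $$d_0(W,\sigma^i W) > \frac16 \qquad\text{and}\qquad d(W,\sigma^i W) > \frac29.$$
   Context: Words are finite strings over $\{0,1\}$; $\alpha(i)$ is the $i$-th letter and $|\alpha|$ the length. Define $W_0 = 0$, $W_{m+1} = W_m W_m 1 W_m$, and let $W=W(0)W(1)\cdots$ (indexed from $0$) be the unique infinite word having every $W_m$ as an initial segment. For words $\alpha,\beta$ of equal length, $d(\alpha,\beta) = |\{i:\alpha(i)\ne\beta(i)\}|/|\alpha|$, and (if $\alpha$ contains a $0$) $d_0(\alpha,\beta) = |\{i : \alpha(i)=0,\ \beta(i)=1\}|/|\{i:\alpha(i)=0\}|$. For $i>0$ and $n\ge0$ let $\alpha_n$ be the subword of $W$ of length $|W_n|$ starting at position $i$, and set $d(W,\sigma^iW) = \lim_{n\to\infty} d(W_n,\alpha_n)$ and $d_0(W,\sigma^iW) = \lim_{n\to\infty} d_0(W_n,\alpha_n)$. *)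

(* limits are real-valued (Un_cv). Letters: false = 0, true = 1. *)
From Stdlib Require Import Reals List Arith.
Import ListNotations.
Open Scope R_scope.

Fixpoint Wm (m : nat) : list bool :=
  match m with
  | O => [false]
  | S m' => Wm m' ++ Wm m' ++ [true] ++ Wm m'
  end.

Definition is_W (w : nat -> bool) : Prop :=
  forall m k, (k < length (Wm m))%nat -> w k = nth k (Wm m) false.

Definition mismatches (w : nat -> bool) (i n : nat) : nat :=
  length (filter (fun k => negb (Bool.eqb (nth k (Wm n) false) (w (i + k)%nat)))
                 (seq 0 (length (Wm n)))).

Definition zero_one (w : nat -> bool) (i n : nat) : nat :=
  length (filter (fun k => andb (negb (nth k (Wm n) false)) (w (i + k)%nat))
                 (seq 0 (length (Wm n)))).

Definition zeros (n : nat) : nat :=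
  length (filter (fun k => negb (nth k (Wm n) false)) (seq 0 (length (Wm n)))).

Definition d_n (w : nat -> bool) (i n : nat) : R :=
  INR (mismatches w i n) / INR (length (Wm n)).
Definition d0_n (w : nat -> bool) (i n : nat) : R :=
  INR (zero_one w i n) / INR (zeros n).

(* Call a position where one word has a 0 and another a 1 a flip.  Every block W_n of the
   hierarchical decomposition of W is followed by a word beginning with W_n W_n or with 1 W_n, so
   what matters are a_n(s) and b_n(s), the flips of W_n against W_n W_n 1 and W_n 1 W_n shifted by
   s.  Splitting W_{n+1} = W_n W_n 1 W_n gives, once |W_n| >= i, that the flips z_n of W_n against
   W[i, i + |W_n|) satisfy z_{n+1} = z_n + a_n(i) + b_n(i), and that
   a_{n+1}(i) + b_{n+1}(i) = 3 (a_n(i) + b_n(i)).  As W_n has 3^n zeros, length (3^{n+1} - 1)/2, and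
   as many 1s as the window (so there are 2 z_n mismatches), d_0 -> S/(2 3^i) and d -> 2S/3^{i+1}
   with S = a_i(i) + b_i(i); both bounds say 3^{i-1} < S.  This is the case r = i of
   3^k < a_{k+1}(r) + b_{k+1}(r) for 1 <= r <= |W_{k+1}|, proved by induction on k from the block
   recurrences for a_{k+1}, b_{k+1}. *)

From Stdlib Require Import Reals List Arith Lia Lra Bool.
From Coquelicot Require Import Coquelicot.
Import ListNotations.

Open Scope nat_scope.

Definition count_below (p : nat -> bool) (n : nat) : nat := length (filter p (seq 0 n)).

Lemma count_below_S p n : count_below p (S n) = count_below p n + (if p n then 1 else 0).
Proof.
  unfold count_below. rewrite seq_S, filter_app, length_app. simpl.
  destruct (p n); simpl; lia.
Qed.

Lemma count_below_ext p q n :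
  (forall k, k < n -> p k = q k) -> count_below p n = count_below q n.
Proof.
  induction n as [|n IH]; intros Hpq; [reflexivity|].
  rewrite !count_below_S, IH by (intros; apply Hpq; lia).
  rewrite Hpq by lia. reflexivity.
Qed.

Lemma count_below_add p m n :
  count_below p (m + n) = count_below p m + count_below (fun k => p (m + k)) n.
Proof.
  induction n as [|n IH].
  - rewrite Nat.add_0_r. change (count_below _ 0) with 0. lia.
  - rewrite Nat.add_succ_r, !count_below_S, IH. lia.
Qed.

Lemma count_below_neqb_balanced (x y : nat -> bool) n :
  count_below x n = count_below y n ->
  count_below (fun k => negb (Bool.eqb (x k) (y k))) n =
  2 * count_below (fun k => negb (x k) && y k) n.
Proof.
  assert (Hid : count_below (fun k => negb (Bool.eqb (x k) (y k))) n + count_below y n =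
                2 * count_below (fun k => negb (x k) && y k) n + count_below x n).
  { induction n as [|n IH]; [reflexivity|].
    rewrite !count_below_S. destruct (x n), (y n); simpl; lia. }
  lia.
Qed.

Definition flips (B : list bool) (f : nat -> bool) : nat :=
  count_below (fun y => negb (nth y B false) && f y) (length B).

Lemma flips_ext B f g : (forall y, y < length B -> f y = g y) -> flips B f = flips B g.
Proof.
  intros Hfg. apply count_below_ext. intros y Hy. rewrite Hfg by exact Hy. reflexivity.
Qed.

Lemma flips_app B1 B2 f :
  flips (B1 ++ B2) f = flips B1 f + flips B2 (fun k => f (length B1 + k)).
Proof.
  unfold flips. rewrite length_app, count_below_add. f_equal.
  - apply count_below_ext. intros k Hk. rewrite app_nth1 by lia. reflexivity.
  - apply count_below_ext. intros k Hk. rewrite app_nth2_plus. reflexivity.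
Qed.

Definition flips_at (B Y : list bool) (s : nat) : nat :=
  flips B (fun y => nth (y + s) Y false).

Lemma flips_at_app B1 B2 Y s :
  flips_at (B1 ++ B2) Y s = flips_at B1 Y s + flips_at B2 Y (length B1 + s).
Proof.
  unfold flips_at. rewrite flips_app. f_equal.
  apply flips_ext. intros y _. f_equal. lia.
Qed.

Lemma flips_at_skip B U Y s :
  length U <= s -> flips_at B (U ++ Y) s = flips_at B Y (s - length U).
Proof.
  intros Hs. apply flips_ext. intros y _.
  rewrite app_nth2 by lia. f_equal. lia.
Qed.

Lemma flips_at_prefix B Y Z s :
  length B + s <= length Y -> flips_at B (Y ++ Z) s = flips_at B Y s.
Proof.
  intros Hs. apply flips_ext. intros y Hy.
  rewrite app_nth1 by lia. reflexivity.
Qed.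

Definition W_len (n : nat) : nat := length (Wm n).

Lemma W_len_S n : W_len (S n) = 3 * W_len n + 1.
Proof. unfold W_len. simpl. rewrite !length_app. simpl. lia. Qed.

Lemma W_len_ge n : n + 1 <= W_len n.
Proof. induction n as [|n IH]; [reflexivity|]. rewrite W_len_S. lia. Qed.

Lemma W_len_pow n : 2 * W_len n + 1 = 3 ^ S n.
Proof. induction n as [|n IH]; [reflexivity|]. rewrite W_len_S. simpl in *. lia. Qed.

Lemma Wm_cons n : exists v, Wm n = false :: v.
Proof.
  induction n as [|n [v Hv]]; [exists []; reflexivity|].
  exists (v ++ Wm n ++ [true] ++ Wm n). simpl. rewrite Hv. reflexivity.
Qed.

Lemma Wm_snoc n : exists u, Wm n = u ++ [false].
Proof.
  induction n as [|n [u Hu]]; [exists []; reflexivity|].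
  exists (Wm n ++ Wm n ++ [true] ++ u). simpl. rewrite Hu, <- !app_assoc. reflexivity.
Qed.

Definition flips_WW1 (n s : nat) : nat := flips_at (Wm n) (Wm n ++ Wm n ++ [true]) s.
Definition flips_W1W (n s : nat) : nat := flips_at (Wm n) (Wm n ++ [true] ++ Wm n) s.

Lemma flips_at_skip_W B n Y s :
  W_len n <= s -> flips_at B (Wm n ++ Y) s = flips_at B Y (s - W_len n).
Proof. apply flips_at_skip. Qed.

Lemma flips_at_skip_true B Y s : 1 <= s -> flips_at B (true :: Y) s = flips_at B Y (s - 1).
Proof. apply (flips_at_skip B [true]). Qed.

Lemma flips_WW1_window n Z s r :
  s <= W_len n + 1 -> s = r -> flips_at (Wm n) (Wm n ++ Wm n ++ true :: Z) s = flips_WW1 n r.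
Proof.
  intros Hs <-. unfold flips_WW1.
  replace (Wm n ++ Wm n ++ true :: Z) with ((Wm n ++ Wm n ++ [true]) ++ Z)
    by (rewrite <- !app_assoc; reflexivity).
  apply flips_at_prefix. rewrite !length_app. unfold W_len in Hs. simpl. lia.
Qed.

Lemma flips_W1W_window n Z s r :
  s <= W_len n + 1 -> s = r -> flips_at (Wm n) (Wm n ++ true :: Wm n ++ Z) s = flips_W1W n r.
Proof.
  intros Hs <-. unfold flips_W1W.
  replace (Wm n ++ true :: Wm n ++ Z) with ((Wm n ++ [true] ++ Wm n) ++ Z)
    by (rewrite <- !app_assoc; reflexivity).
  apply flips_at_prefix. rewrite !length_app. unfold W_len in Hs. simpl. lia.
Qed.

Lemma flips_W1W_window_end n s r :
  s = r -> flips_at (Wm n) (Wm n ++ true :: Wm n) s = flips_W1W n r.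
Proof. intros <-. reflexivity. Qed.

Lemma flips_W1_window n Z s r :
  s <= 1 -> s = r -> flips_at (Wm n) (Wm n ++ true :: Z) s = flips_W1W n r.
Proof.
  intros Hs <-. unfold flips_W1W.
  replace (Wm n ++ true :: Z) with ((Wm n ++ [true]) ++ Z)
    by (rewrite <- app_assoc; reflexivity).
  replace (Wm n ++ [true] ++ Wm n) with ((Wm n ++ [true]) ++ Wm n)
    by (rewrite <- app_assoc; reflexivity).
  rewrite !(flips_at_prefix _ (Wm n ++ [true])) by (rewrite length_app; simpl; lia).
  reflexivity.
Qed.

Lemma flips_WWW_window n Z s r :
  s <= W_len n -> s = r -> flips_at (Wm n) (Wm n ++ Wm n ++ Wm n ++ Z) s = flips_WW1 n r.
Proof.
  intros Hs <-. unfold flips_WW1. rewrite !(app_assoc (Wm n)).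
  rewrite !(flips_at_prefix _ (Wm n ++ Wm n))
    by (rewrite length_app; unfold W_len in Hs; lia).
  reflexivity.
Qed.

Lemma flips_at_single_zero Y t : flips_at [false] Y t = if nth t Y false then 1 else 0.
Proof. unfold flips_at, flips, count_below. simpl. destruct (nth t Y false); reflexivity. Qed.

(* Shifted by |W_n| + 1, the windows W_n W_n W_n and W_n W_n 1 differ only in the letter
   W_n(0) = 0 versus 1, which faces the final 0 of W_n. *)
Lemma flips_WWW_window_edge n Z s r :
  s = W_len n + 1 -> s = r ->
  flips_at (Wm n) (Wm n ++ Wm n ++ Wm n ++ Z) s + 1 = flips_WW1 n r.
Proof.
  intros -> <-. unfold flips_WW1.
  destruct (Wm_snoc n) as [u Hu]. destruct (Wm_cons n) as [v Hv].
  assert (Hlen : length u + 1 = W_len n) by (unfold W_len; rewrite Hu, length_app; reflexivity).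
  assert (Hsplit : forall Y t,
             flips_at (Wm n) Y t = flips_at u Y t + flips_at [false] Y (length u + t))
    by (intros; rewrite Hu at 1; apply flips_at_app).
  rewrite !Hsplit, !(app_assoc (Wm n)).
  rewrite !(flips_at_prefix u (Wm n ++ Wm n)) by (rewrite length_app; unfold W_len in *; lia).
  enough (Hlast : flips_at [false] ((Wm n ++ Wm n) ++ Wm n ++ Z) (length u + (W_len n + 1)) + 1 =
                  flips_at [false] ((Wm n ++ Wm n) ++ [true]) (length u + (W_len n + 1))) by lia.
  assert (Hlen2 : length (Wm n ++ Wm n) = length u + (W_len n + 1))
    by (rewrite length_app; unfold W_len in *; lia).
  rewrite !flips_at_single_zero, <- Hlen2, !(app_nth2 (Wm n ++ Wm n)), !Nat.sub_diag by lia.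
  rewrite Hv. reflexivity.
Qed.

(* Evaluates flips_at (Wm n) X t for a window X built from blocks W_n and 1: drop the blocks
   lying entirely before the shift, then recognize one of the windows above. *)
Local Ltac reduce_window :=
  repeat first
    [ apply flips_WW1_window; lia
    | apply flips_W1W_window; lia
    | apply flips_W1W_window_end; lia
    | apply flips_W1_window; lia
    | apply flips_WWW_window; lia
    | apply flips_WWW_window_edge; lia
    | rewrite flips_at_skip_W by lia
    | rewrite flips_at_skip_true by lia ].

Lemma flips_at_true Y s : flips_at [true] Y s = 0.
Proof. reflexivity. Qed.

Lemma flips_at_Wm_succ n Y s :
  flips_at (Wm (S n)) Y s =
  flips_at (Wm n) Y s + flips_at (Wm n) Y (W_len n + s) +
  flips_at (Wm n) Y (2 * W_len n + 1 + s).
Proof.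
  change (Wm (S n)) with (Wm n ++ Wm n ++ [true] ++ Wm n).
  rewrite !flips_at_app, flips_at_true. fold (W_len n). simpl length.
  rewrite Nat.add_0_l, Nat.add_assoc. do 2 f_equal. lia.
Qed.

Section Recurrences.
Variable n : nat.

Let XA := Wm n ++ Wm n ++ true :: Wm n ++ Wm n ++ Wm n ++ true :: Wm n ++ [true].
Let XB := Wm n ++ Wm n ++ true :: Wm n ++ true :: Wm n ++ Wm n ++ true :: Wm n.

Lemma flips_WW1_succ s :
  flips_WW1 (S n) s =
  flips_at (Wm n) XA s + flips_at (Wm n) XA (W_len n + s) +
  flips_at (Wm n) XA (2 * W_len n + 1 + s).
Proof.
  unfold flips_WW1 at 1. rewrite flips_at_Wm_succ.
  replace (Wm (S n) ++ Wm (S n) ++ [true]) with XA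
    by (unfold XA; simpl; rewrite <- !app_assoc; reflexivity).
  reflexivity.
Qed.

Lemma flips_W1W_succ s :
  flips_W1W (S n) s =
  flips_at (Wm n) XB s + flips_at (Wm n) XB (W_len n + s) +
  flips_at (Wm n) XB (2 * W_len n + 1 + s).
Proof.
  unfold flips_W1W at 1. rewrite flips_at_Wm_succ.
  replace (Wm (S n) ++ [true] ++ Wm (S n)) with XB
    by (unfold XB; simpl; rewrite <- !app_assoc; reflexivity).
  reflexivity.
Qed.

Local Ltac block_value := unfold XA, XB; pose proof (W_len_ge n); reduce_window.

Lemma flips_WW1_succ_low s :
  s <= W_len n -> flips_WW1 (S n) s = 2 * flips_WW1 n s + flips_W1W n s.
Proof.
  intros Hs. rewrite flips_WW1_succ.
  assert (flips_at (Wm n) XA s = flips_WW1 n s) by block_value.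
  assert (flips_at (Wm n) XA (W_len n + s) = flips_W1W n s) by block_value.
  assert (flips_at (Wm n) XA (2 * W_len n + 1 + s) = flips_WW1 n s) by block_value.
  lia.
Qed.

Lemma flips_W1W_succ_low s :
  s <= W_len n + 1 -> flips_W1W (S n) s = flips_WW1 n s + 2 * flips_W1W n s.
Proof.
  intros Hs. rewrite flips_W1W_succ.
  assert (flips_at (Wm n) XB s = flips_WW1 n s) by block_value.
  assert (flips_at (Wm n) XB (W_len n + s) = flips_W1W n s) by block_value.
  assert (flips_at (Wm n) XB (2 * W_len n + 1 + s) = flips_W1W n s) by block_value.
  lia.
Qed.

Lemma flips_WW1_succ_edge x :
  x = W_len n + 1 -> flips_WW1 (S n) x + 1 = 2 * flips_WW1 n x + flips_W1W n x.
Proof.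
  intros ->. rewrite flips_WW1_succ.
  assert (flips_at (Wm n) XA (W_len n + 1) = flips_WW1 n (W_len n + 1)) by block_value.
  assert (flips_at (Wm n) XA (W_len n + (W_len n + 1)) = flips_W1W n (W_len n + 1))
    by block_value.
  assert (flips_at (Wm n) XA (2 * W_len n + 1 + (W_len n + 1)) + 1 = flips_WW1 n (W_len n + 1))
    by block_value.
  lia.
Qed.

Lemma flips_WW1_succ_mid x q r :
  2 <= r <= W_len n + 1 -> x = W_len n + r -> q + 1 = r ->
  flips_WW1 (S n) x = flips_W1W n r + flips_WW1 n q + flips_WW1 n r.
Proof.
  intros Hr -> Hq. rewrite flips_WW1_succ.
  assert (flips_at (Wm n) XA (W_len n + r) = flips_W1W n r) by block_value.
  assert (flips_at (Wm n) XA (W_len n + (W_len n + r)) = flips_WW1 n q) by block_value.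
  assert (flips_at (Wm n) XA (2 * W_len n + 1 + (W_len n + r)) = flips_WW1 n r) by block_value.
  lia.
Qed.

Lemma flips_W1W_succ_mid x q r :
  2 <= r <= W_len n + 1 -> x = W_len n + r -> q + 1 = r ->
  flips_W1W (S n) x = flips_W1W n r + flips_W1W n q + flips_WW1 n q.
Proof.
  intros Hr -> Hq. rewrite flips_W1W_succ.
  assert (flips_at (Wm n) XB (W_len n + r) = flips_W1W n r) by block_value.
  assert (flips_at (Wm n) XB (W_len n + (W_len n + r)) = flips_W1W n q) by block_value.
  assert (flips_at (Wm n) XB (2 * W_len n + 1 + (W_len n + r)) = flips_WW1 n q)
    by block_value.
  lia.
Qed.

Lemma flips_WW1_succ_mid_edge x :
  x = 2 * W_len n + 2 ->
  flips_WW1 (S n) x + 1 = flips_WW1 n 1 + flips_WW1 n (W_len n + 1) + flips_W1W n 2.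
Proof.
  intros ->. rewrite flips_WW1_succ.
  assert (flips_at (Wm n) XA (2 * W_len n + 2) = flips_WW1 n 1) by block_value.
  assert (flips_at (Wm n) XA (W_len n + (2 * W_len n + 2)) + 1 = flips_WW1 n (W_len n + 1))
    by block_value.
  assert (flips_at (Wm n) XA (2 * W_len n + 1 + (2 * W_len n + 2)) = flips_W1W n 2)
    by block_value.
  lia.
Qed.

Lemma flips_W1W_succ_mid_edge x :
  x = 2 * W_len n + 2 ->
  flips_W1W (S n) x = flips_W1W n 1 + flips_W1W n (W_len n + 1) + flips_WW1 n (W_len n + 1).
Proof.
  intros ->. rewrite flips_W1W_succ.
  assert (flips_at (Wm n) XB (2 * W_len n + 2) = flips_W1W n 1) by block_value.
  assert (flips_at (Wm n) XB (W_len n + (2 * W_len n + 2)) = flips_W1W n (W_len n + 1))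
    by block_value.
  assert (flips_at (Wm n) XB (2 * W_len n + 1 + (2 * W_len n + 2)) = flips_WW1 n (W_len n + 1))
    by block_value.
  lia.
Qed.

Lemma flips_WW1_succ_high x q r :
  3 <= r <= W_len n + 1 -> x = 2 * W_len n + r -> q + 1 = r ->
  flips_WW1 (S n) x = 2 * flips_WW1 n q + flips_W1W n r.
Proof.
  intros Hr -> Hq. rewrite flips_WW1_succ.
  assert (flips_at (Wm n) XA (2 * W_len n + r) = flips_WW1 n q) by block_value.
  assert (flips_at (Wm n) XA (W_len n + (2 * W_len n + r)) = flips_WW1 n q)
    by block_value.
  assert (flips_at (Wm n) XA (2 * W_len n + 1 + (2 * W_len n + r)) = flips_W1W n r)
    by block_value.
  lia.
Qed.

Lemma flips_W1W_succ_high x p q r :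
  3 <= r <= W_len n + 1 -> x = 2 * W_len n + r -> q + 1 = r -> p + 2 = r ->
  flips_W1W (S n) x = 2 * flips_W1W n q + flips_WW1 n p.
Proof.
  intros Hr -> Hq Hp. rewrite flips_W1W_succ.
  assert (flips_at (Wm n) XB (2 * W_len n + r) = flips_W1W n q) by block_value.
  assert (flips_at (Wm n) XB (W_len n + (2 * W_len n + r)) = flips_WW1 n p)
    by block_value.
  assert (flips_at (Wm n) XB (2 * W_len n + 1 + (2 * W_len n + r)) = flips_W1W n q)
    by block_value.
  lia.
Qed.

Lemma flips_WW1_succ_top x :
  x = 3 * W_len n + 2 ->
  flips_WW1 (S n) x + 1 = 2 * flips_WW1 n (W_len n + 1) + flips_W1W n 1.
Proof.
  intros ->. rewrite flips_WW1_succ.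
  assert (flips_at (Wm n) XA (3 * W_len n + 2) + 1 = flips_WW1 n (W_len n + 1)) by block_value.
  assert (flips_at (Wm n) XA (W_len n + (3 * W_len n + 2)) = flips_WW1 n (W_len n + 1))
    by block_value.
  assert (flips_at (Wm n) XA (2 * W_len n + 1 + (3 * W_len n + 2)) = flips_W1W n 1)
    by block_value.
  lia.
Qed.

Lemma flips_W1W_succ_top x :
  x = 3 * W_len n + 2 ->
  flips_W1W (S n) x = 2 * flips_W1W n (W_len n + 1) + flips_WW1 n (W_len n).
Proof.
  intros ->. rewrite flips_W1W_succ.
  assert (flips_at (Wm n) XB (3 * W_len n + 2) = flips_W1W n (W_len n + 1)) by block_value.
  assert (flips_at (Wm n) XB (W_len n + (3 * W_len n + 2)) = flips_WW1 n (W_len n))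
    by block_value.
  assert (flips_at (Wm n) XB (2 * W_len n + 1 + (3 * W_len n + 2)) = flips_W1W n (W_len n + 1))
    by block_value.
  lia.
Qed.

End Recurrences.

Record flip_invariant (k : nat) : Prop := {
  inv_WW1_1 : flips_WW1 (S k) 1 = W_len k;
  inv_W1W_1 : flips_W1W (S k) 1 = W_len k + 1;
  inv_WW1_2 : flips_WW1 (S k) 2 = 3 ^ k;
  inv_W1W_2 : flips_W1W (S k) 2 = 3 ^ k;
  inv_WW1_end_pred : flips_WW1 (S k) (W_len (S k) - 1) = W_len k;
  inv_WW1_end : flips_WW1 (S k) (W_len (S k)) = 0;
  inv_W1W_end : flips_W1W (S k) (W_len (S k)) = W_len k + 1;
  inv_WW1_end_succ : flips_WW1 (S k) (W_len (S k) + 1) = W_len k + 1;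
  inv_W1W_end_succ : flips_W1W (S k) (W_len (S k) + 1) = 0;
  inv_bound0 : forall r, 1 <= r <= W_len (S k) ->
    3 ^ k < flips_WW1 (S k) r + flips_W1W (S k) r;
  inv_bound1 : forall r q, 2 <= r <= W_len (S k) -> q + 1 = r ->
    3 ^ k < flips_WW1 (S k) q + flips_W1W (S k) r;
  inv_bound2 : forall r p, 3 <= r <= W_len (S k) -> p + 2 = r ->
    3 ^ k < flips_WW1 (S k) p + flips_W1W (S k) r }.

Lemma flip_invariant_0 : flip_invariant 0.
Proof.
  constructor; try (vm_compute; reflexivity); change (W_len 1) with 4.
  - intros r Hr. assert (r = 1 \/ r = 2 \/ r = 3 \/ r = 4) as [-> | [-> | [-> | ->]]] by lia;
      vm_compute; lia.
  - intros r q Hr <-. assert (q = 1 \/ q = 2 \/ q = 3) as [-> | [-> | ->]] by lia;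
      vm_compute; lia.
  - intros r p Hr <-. assert (p = 1 \/ p = 2) as [-> | ->] by lia; vm_compute; lia.
Qed.

Section Step.
Variable k : nat.
Hypothesis Hk : flip_invariant k.

Local Notation L := (W_len (S k)).

Local Ltac level_facts :=
  pose proof (W_len_S (S k)); pose proof (W_len_S k); pose proof (W_len_pow k);
  pose proof (W_len_ge k); change (3 ^ S k) with (3 * 3 ^ k) in *.

Lemma flip_bound0_succ x : 1 <= x <= W_len (S (S k)) ->
  3 ^ S k < flips_WW1 (S (S k)) x + flips_W1W (S (S k)) x.
Proof.
  intros Hx. destruct Hk as [a1 b1 a2 b2 aLm aL bL aL1 bL1 B0 B1 B2]. level_facts.
  assert (x <= L \/ x = L + 1 \/ L + 2 <= x <= 2 * L \/ x = 2 * L + 1 \/ x = 2 * L + 2 \/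
          2 * L + 3 <= x <= 3 * L \/ x = 3 * L + 1)
    as [Hr | [-> | [Hr | [-> | [-> | [Hr | ->]]]]]] by lia.
  - rewrite (flips_WW1_succ_low (S k)), (flips_W1W_succ_low (S k)) by lia.
    pose proof (B0 x ltac:(lia)). lia.
  - pose proof (flips_WW1_succ_edge (S k) (L + 1) eq_refl).
    rewrite (flips_W1W_succ_low (S k)) by lia. lia.
  - rewrite (flips_WW1_succ_mid (S k) x (x - L - 1) (x - L)),
      (flips_W1W_succ_mid (S k) x (x - L - 1) (x - L)) by lia.
    pose proof (B0 (x - L) ltac:(lia)). pose proof (B0 (x - L - 1) ltac:(lia)).
    pose proof (B1 (x - L) (x - L - 1) ltac:(lia) ltac:(lia)). lia.
  - rewrite (flips_WW1_succ_mid (S k) _ L (L + 1)),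
      (flips_W1W_succ_mid (S k) _ L (L + 1)) by lia. lia.
  - pose proof (flips_WW1_succ_mid_edge (S k) (2 * L + 2) eq_refl).
    rewrite (flips_W1W_succ_mid_edge (S k)) by lia. lia.
  - rewrite (flips_WW1_succ_high (S k) x (x - 2 * L - 1) (x - 2 * L)),
      (flips_W1W_succ_high (S k) x (x - 2 * L - 2) (x - 2 * L - 1) (x - 2 * L)) by lia.
    pose proof (B0 (x - 2 * L - 1) ltac:(lia)).
    pose proof (B2 (x - 2 * L) (x - 2 * L - 2) ltac:(lia) ltac:(lia)). lia.
  - rewrite (flips_WW1_succ_high (S k) _ L (L + 1)),
      (flips_W1W_succ_high (S k) _ (L - 1) L (L + 1)) by lia. lia.
Qed.

Lemma flip_bound1_succ x y : 2 <= x <= W_len (S (S k)) -> y + 1 = x ->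
  3 ^ S k < flips_WW1 (S (S k)) y + flips_W1W (S (S k)) x.
Proof.
  intros Hx Hy. destruct Hk as [a1 b1 a2 b2 aLm aL bL aL1 bL1 B0 B1 B2]. level_facts.
  assert (x <= L \/ x = L + 1 \/ x = L + 2 \/ L + 3 <= x <= 2 * L \/ x = 2 * L + 1 \/
          x = 2 * L + 2 \/ x = 2 * L + 3 \/ 2 * L + 4 <= x <= 3 * L + 1)
    as [Hr | [-> | [-> | [Hr | [-> | [-> | [-> | Hr]]]]]]] by lia.
  - rewrite (flips_WW1_succ_low (S k)), (flips_W1W_succ_low (S k)) by lia.
    pose proof (B0 x ltac:(lia)). pose proof (B0 y ltac:(lia)).
    pose proof (B1 x y ltac:(lia) Hy). lia.
  - replace y with L by lia.
    rewrite (flips_WW1_succ_low (S k)), (flips_W1W_succ_low (S k)) by lia. lia.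
  - replace y with (L + 1) by lia.
    pose proof (flips_WW1_succ_edge (S k) (L + 1) eq_refl).
    rewrite (flips_W1W_succ_mid (S k) _ 1 2) by lia. lia.
  - rewrite (flips_WW1_succ_mid (S k) y (x - L - 2) (x - L - 1)),
      (flips_W1W_succ_mid (S k) x (x - L - 1) (x - L)) by lia.
    pose proof (B0 (x - L - 1) ltac:(lia)).
    pose proof (B1 (x - L - 1) (x - L - 2) ltac:(lia) ltac:(lia)).
    pose proof (B1 (x - L) (x - L - 1) ltac:(lia) ltac:(lia)). lia.
  - rewrite (flips_WW1_succ_mid (S k) y (L - 1) L),
      (flips_W1W_succ_mid (S k) _ L (L + 1)) by lia. lia.
  - rewrite (flips_WW1_succ_mid (S k) y L (L + 1)) by lia.
    rewrite (flips_W1W_succ_mid_edge (S k)) by lia. lia.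
  - pose proof (flips_WW1_succ_mid_edge (S k) y ltac:(lia)).
    rewrite (flips_W1W_succ_high (S k) _ 1 2 3) by lia. lia.
  - rewrite (flips_WW1_succ_high (S k) y (x - 2 * L - 2) (x - 2 * L - 1)),
      (flips_W1W_succ_high (S k) x (x - 2 * L - 2) (x - 2 * L - 1) (x - 2 * L)) by lia.
    pose proof (B1 (x - 2 * L - 1) (x - 2 * L - 2) ltac:(lia) ltac:(lia)). lia.
Qed.

Lemma flip_bound2_succ x z : 3 <= x <= W_len (S (S k)) -> z + 2 = x ->
  3 ^ S k < flips_WW1 (S (S k)) z + flips_W1W (S (S k)) x.
Proof.
  intros Hx Hz. destruct Hk as [a1 b1 a2 b2 aLm aL bL aL1 bL1 B0 B1 B2]. level_facts.
  assert (x <= L \/ x = L + 1 \/ x = L + 2 \/ x = L + 3 \/ L + 4 <= x <= 2 * L \/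
          x = 2 * L + 1 \/ x = 2 * L + 2 \/ x = 2 * L + 3 \/ x = 2 * L + 4 \/
          2 * L + 5 <= x <= 3 * L + 1)
    as [Hr | [-> | [-> | [-> | [Hr | [-> | [-> | [-> | [-> | Hr]]]]]]]]] by lia.
  - rewrite (flips_WW1_succ_low (S k)), (flips_W1W_succ_low (S k)) by lia.
    pose proof (B0 x ltac:(lia)). pose proof (B0 z ltac:(lia)).
    pose proof (B2 x z ltac:(lia) Hz). lia.
  - replace z with (L - 1) by lia.
    rewrite (flips_WW1_succ_low (S k)), (flips_W1W_succ_low (S k)) by lia. lia.
  - replace z with L by lia.
    rewrite (flips_WW1_succ_low (S k)), (flips_W1W_succ_mid (S k) _ 1 2) by lia. lia.
  - replace z with (L + 1) by lia.
    pose proof (flips_WW1_succ_edge (S k) (L + 1) eq_refl).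
    rewrite (flips_W1W_succ_mid (S k) _ 2 3) by lia. lia.
  - rewrite (flips_WW1_succ_mid (S k) z (x - L - 3) (x - L - 2)),
      (flips_W1W_succ_mid (S k) x (x - L - 1) (x - L)) by lia.
    pose proof (B1 (x - L - 2) (x - L - 3) ltac:(lia) ltac:(lia)).
    pose proof (B1 (x - L - 1) (x - L - 2) ltac:(lia) ltac:(lia)).
    pose proof (B1 (x - L) (x - L - 1) ltac:(lia) ltac:(lia)). lia.
  - rewrite (flips_WW1_succ_mid (S k) z (L - 2) (L - 1)),
      (flips_W1W_succ_mid (S k) _ L (L + 1)) by lia.
    pose proof (B1 (L - 1) (L - 2) ltac:(lia) ltac:(lia)). lia.
  - rewrite (flips_WW1_succ_mid (S k) z (L - 1) L) by lia.
    rewrite (flips_W1W_succ_mid_edge (S k)) by lia. lia.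
  - rewrite (flips_WW1_succ_mid (S k) z L (L + 1)) by lia.
    rewrite (flips_W1W_succ_high (S k) _ 1 2 3) by lia. lia.
  - pose proof (flips_WW1_succ_mid_edge (S k) z ltac:(lia)).
    rewrite (flips_W1W_succ_high (S k) _ 2 3 4) by lia.
    pose proof (B0 2 ltac:(lia)). lia.
  - rewrite (flips_WW1_succ_high (S k) z (x - 2 * L - 3) (x - 2 * L - 2)),
      (flips_W1W_succ_high (S k) x (x - 2 * L - 2) (x - 2 * L - 1) (x - 2 * L)) by lia.
    pose proof (B0 (x - 2 * L - 2) ltac:(lia)).
    pose proof (B2 (x - 2 * L - 1) (x - 2 * L - 3) ltac:(lia) ltac:(lia)). lia.
Qed.

Lemma flip_invariant_succ : flip_invariant (S k).
Proof.
  pose proof Hk as [a1 b1 a2 b2 aLm aL bL aL1 bL1 _ _ _].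
  constructor; level_facts.
  - rewrite (flips_WW1_succ_low (S k)) by lia. lia.
  - rewrite (flips_W1W_succ_low (S k)) by lia. lia.
  - rewrite (flips_WW1_succ_low (S k)) by lia. lia.
  - rewrite (flips_W1W_succ_low (S k)) by lia. lia.
  - rewrite (flips_WW1_succ_high (S k) _ (L - 1) L) by lia. lia.
  - rewrite (flips_WW1_succ_high (S k) _ L (L + 1)) by lia. lia.
  - rewrite (flips_W1W_succ_high (S k) _ (L - 1) L (L + 1)) by lia. lia.
  - pose proof (flips_WW1_succ_top (S k) (W_len (S (S k)) + 1) ltac:(lia)). lia.
  - rewrite (flips_W1W_succ_top (S k)) by lia. lia.
  - exact flip_bound0_succ.
  - exact flip_bound1_succ.
  - exact flip_bound2_succ.
Qed.

End Step.

Lemma flip_invariant_all k : flip_invariant k.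
Proof.
  induction k as [|k IH]; [exact flip_invariant_0 | exact (flip_invariant_succ k IH)].
Qed.

Definition flip_total (n s : nat) : nat := flips_WW1 n s + flips_W1W n s.

Lemma flip_total_succ n s : s <= W_len n -> flip_total (S n) s = 3 * flip_total n s.
Proof.
  intros Hs. unfold flip_total.
  rewrite flips_WW1_succ_low, flips_W1W_succ_low by lia. lia.
Qed.

Lemma flip_total_iter i k : flip_total (k + i) i = 3 ^ k * flip_total i i.
Proof.
  induction k as [|k IH]; [simpl; lia|].
  cbn [Nat.add]. rewrite flip_total_succ, IH by (pose proof (W_len_ge (k + i)); lia).
  simpl. lia.
Qed.

Lemma flip_total_lower i : 0 < i -> 3 ^ i < 3 * flip_total i i.
Proof.
  intros Hi. destruct i as [|j]; [lia|].
  pose proof (inv_bound0 j (flip_invariant_all j) (S j)) as Hb.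
  pose proof (W_len_ge (S j)). unfold flip_total. simpl. lia.
Qed.

Lemma zeros_eq n : zeros n = 3 ^ n.
Proof.
  assert (Hflips : forall m, zeros m = flips (Wm m) (fun _ => true)).
  { intros m. apply count_below_ext. intros y _. rewrite andb_true_r. reflexivity. }
  induction n as [|n IH]; [reflexivity|].
  rewrite Hflips in *. change (Wm (S n)) with (Wm n ++ Wm n ++ [true] ++ Wm n).
  rewrite !flips_app, IH. simpl. lia.
Qed.

Section InfiniteWord.
Variable w : nat -> bool.
Hypothesis Hw : is_W w.

Lemma w_factor m P Y Z t :
  Wm m = P ++ Y ++ Z -> t < length Y -> w (length P + t) = nth t Y false.
Proof.
  intros Hm Ht. rewrite (Hw m) by (rewrite Hm, !length_app; lia).
  rewrite Hm, app_nth2_plus, app_nth1 by exact Ht. reflexivity.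
Qed.

(* The third block W_n of W_{n+1} is followed in W by W_n W_n, the start of the next W_{n+1}. *)
Lemma zero_one_succ i n :
  i <= W_len n -> zero_one w i (S n) = zero_one w i n + flip_total n i.
Proof.
  intros Hi. unfold W_len in Hi. unfold flip_total, zero_one.
  change (length (filter ?p (seq 0 (length ?B)))) with (flips B (fun k => w (i + k))).
  change (Wm (S n)) with (Wm n ++ Wm n ++ [true] ++ Wm n).
  rewrite !flips_app. change (flips [true] _) with 0. simpl length.
  unfold flips_WW1, flips_W1W, flips_at.
  assert (HW1W : flips (Wm n) (fun k => w (i + (length (Wm n) + k))) =
                 flips (Wm n) (fun y => nth (y + i) (Wm n ++ [true] ++ Wm n) false)).
  { apply flips_ext. intros y Hy.
    replace (i + (length (Wm n) + y)) with (length (Wm n) + (y + i)) by lia.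
    apply (w_factor (S n) (Wm n) _ []); [simpl; rewrite app_nil_r; reflexivity |].
    rewrite !length_app. simpl. lia. }
  assert (HWW1 : flips (Wm n) (fun k => w (i + (length (Wm n) + (length (Wm n) + (1 + k))))) =
                 flips (Wm n) (fun y => nth (y + i) (Wm n ++ Wm n ++ [true]) false)).
  { apply flips_ext. intros y Hy.
    replace (i + (length (Wm n) + (length (Wm n) + (1 + y))))
      with (length (Wm n ++ Wm n ++ [true]) + (y + i)) by (rewrite !length_app; simpl; lia).
    rewrite (w_factor (S (S n)) _ (Wm n ++ Wm n) (Wm n ++ [true] ++ Wm n ++ [true] ++ Wm (S n)));
      [| cbn [Wm]; rewrite <- !app_assoc; reflexivity | rewrite length_app; lia].
    rewrite app_assoc, (app_nth1 (Wm n ++ Wm n)) by (rewrite length_app; lia). reflexivity. }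
  rewrite HW1W, HWW1. lia.
Qed.

(* W(|W_n| + j) = W(j) for j < |W_n|, so the window has as many 1s as W_n. *)
Lemma mismatches_double i n : i <= W_len n -> mismatches w i n = 2 * zero_one w i n.
Proof.
  intros Hi. unfold mismatches, zero_one.
  apply (count_below_neqb_balanced (fun k => nth k (Wm n) false) (fun k => w (i + k))).
  fold (W_len n). transitivity (count_below w (W_len n)).
  { apply count_below_ext. intros k Hk. symmetry. apply Hw. exact Hk. }
  assert (Hperiod : count_below (fun k => w (W_len n + k)) i = count_below w i).
  { apply count_below_ext. intros k Hk. rewrite (Hw n k) by (unfold W_len in *; lia).
    apply (w_factor (S n) (Wm n) (Wm n) ([true] ++ Wm n));
      [reflexivity | unfold W_len in *; lia]. }
  pose proof (count_below_add w i (W_len n)) as Hi_first.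
  pose proof (count_below_add w (W_len n) i) as HL_first.
  rewrite Nat.add_comm in HL_first. lia.
Qed.

Lemma zero_one_closed_form i k :
  2 * zero_one w i (k + i) + flip_total i i = 2 * zero_one w i i + 3 ^ k * flip_total i i.
Proof.
  induction k as [|k IH]; [simpl; lia|].
  cbn [Nat.add]. rewrite zero_one_succ by (pose proof (W_len_ge (k + i)); lia).
  rewrite flip_total_iter. simpl. lia.
Qed.

End InfiniteWord.

Open Scope R_scope.

Lemma INR_pow3 n : INR (3 ^ n) = 3 ^ n.
Proof. rewrite pow_INR. f_equal. simpl. lra. Qed.

Lemma Rdiv_gt_of_mult_lt a b c : 0 < b -> c * b < a -> a / b > c.
Proof.
  intros Hb Hcb. apply Rlt_gt, (Rmult_lt_reg_r b); [exact Hb |].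
  unfold Rdiv. rewrite Rmult_assoc, Rinv_l, Rmult_1_r by lra. exact Hcb.
Qed.

Lemma Un_cv_ratio_pow3 (u : nat -> R) (i : nat) (p q c d : R) :
  d <> 0 -> (forall k, u (k + i)%nat = (p + q * 3 ^ k) / (c + d * 3 ^ k)) -> Un_cv u (q / d).
Proof.
  intros Hd Hu. apply is_lim_seq_Reals, (is_lim_seq_incr_n u i).
  assert (Hgeom : is_lim_seq (fun k => (/ 3) ^ k) 0)
    by (apply is_lim_seq_geom; rewrite Rabs_pos_eq; lra).
  apply (is_lim_seq_ext (fun k => (p * (/ 3) ^ k + q) / (c * (/ 3) ^ k + d))).
  { intros k. assert (H3k : 3 ^ k <> 0) by (apply pow_nonzero; lra).
    rewrite Hu, <- (Rdiv_mult_r_r (3 ^ k)) by exact H3k.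
    rewrite pow_inv. f_equal; field; exact H3k. }
  replace (q / d) with ((p * 0 + q) / (c * 0 + d)) by (f_equal; ring).
  apply is_lim_seq_div'; [| | rewrite Rmult_0_r, Rplus_0_l; exact Hd];
    apply is_lim_seq_plus'; auto using is_lim_seq_const, is_lim_seq_mult'.
Qed.

Section Densities.
Variable w : nat -> bool.
Hypothesis Hw : is_W w.
Variable i : nat.

Lemma zero_one_closed_form_R k :
  2 * INR (zero_one w i (k + i)) =
  2 * INR (zero_one w i i) - INR (flip_total i i) + INR (flip_total i i) * 3 ^ k.
Proof.
  pose proof (f_equal INR (zero_one_closed_form w Hw i k)) as H.
  rewrite !plus_INR, !mult_INR, INR_pow3 in H. simpl (INR 2) in H. lra.
Qed.

Lemma d0_n_closed_form k :
  d0_n w i (k + i) =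
  (2 * INR (zero_one w i i) - INR (flip_total i i) + INR (flip_total i i) * 3 ^ k) /
  (0 + 2 * 3 ^ i * 3 ^ k).
Proof.
  unfold d0_n. rewrite zeros_eq, INR_pow3, pow_add, <- zero_one_closed_form_R.
  field. split; apply pow_nonzero; lra.
Qed.

Lemma d_n_closed_form k :
  d_n w i (k + i) =
  (2 * (2 * INR (zero_one w i i) - INR (flip_total i i)) + 2 * INR (flip_total i i) * 3 ^ k) /
  (-1 + 3 * 3 ^ i * 3 ^ k).
Proof.
  unfold d_n. fold (W_len (k + i)).
  rewrite (mismatches_double w Hw) by (pose proof (W_len_ge (k + i)); lia).
  pose proof (f_equal INR (W_len_pow (k + i))) as Hlen.
  rewrite plus_INR, mult_INR, INR_pow3 in Hlen. simpl (INR 2) in Hlen. simpl (INR 1) in Hlen.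
  replace (INR (W_len (k + i))) with ((3 * 3 ^ i * 3 ^ k - 1) / 2)
    by (rewrite <- tech_pow_Rmult, pow_add in Hlen; lra).
  rewrite mult_INR. change (INR 2) with 2. rewrite zero_one_closed_form_R.
  assert (1 <= 3 ^ i) by (apply pow_R1_Rle; lra).
  assert (1 <= 3 ^ k) by (apply pow_R1_Rle; lra).
  field. nra.
Qed.

End Densities.

Theorem proposition1 (w : nat -> bool) (Hw : is_W w) (i : nat) (hi : (0 < i)%nat) :
  (exists L0 : R, Un_cv (d0_n w i) L0 /\ L0 > 1 / 6) /\
  (exists L : R, Un_cv (d_n w i) L /\ L > 2 / 9).
Proof.
  assert (Hlower : 3 ^ i < 3 * INR (flip_total i i)).
  { pose proof (lt_INR _ _ (flip_total_lower i hi)) as H.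
    rewrite mult_INR, INR_pow3 in H. simpl (INR 3) in H. lra. }
  assert (H3i : 0 < 3 ^ i) by (apply pow_lt; lra).
  split.
  - exists (INR (flip_total i i) / (2 * 3 ^ i)). split.
    + eapply (Un_cv_ratio_pow3 _ i _ _ 0); [lra | apply d0_n_closed_form, Hw].
    + apply Rdiv_gt_of_mult_lt; lra.
  - exists (2 * INR (flip_total i i) / (3 * 3 ^ i)). split.
    + eapply (Un_cv_ratio_pow3 _ i _ _ (-1)); [lra | apply d_n_closed_form, Hw].
    + apply Rdiv_gt_of_mult_lt; lra.
Qed.
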